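(* Consider the system of ordinary differential equations \[ \dot u=r_{1}u(1-u)-a_{12}uv-a_{13}uw,\qquad \dot v=r_{2}v(1-v)+a_{21}uv,\qquad \dot w=-\mu w+a_{31}uw, \] with all parameters $r_1,r_2,\mu,a_{12},a_{13},a_{21},a_{31}$ positive. Assume $r_{1}>a_{12}$ and $\mu\ge a_{31}u^*_{12}$, where \[ u^*_{12}=\frac{r_{2}(r_{1}-a_{12})}{r_{1}r_{2}+a_{12}a_{21}},\qquad v^*_{12}=\frac{r_{1}r_{2}+r_{1}a_{21}}{r_{1}r_{2}+a_{12}a_{21}}. \] Then the equilibrium $E_{12}=(u^*_{12},v^*_{12},0)$ exists (lies in the nonnegative orthant with $u^*_{12},v^*_{12}>0$) and it is globally asymptotically stable, i.e. it is stable and every solution with $u(0)>0$, $v(0)>0$, $w(0)\ge 0$ converges to $E_{12}$ as $t\to\infty$.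
   Context: $u,v,w$ denote population densities of three species; solutions are considered in the nonnegative orthant. *)

From Stdlib Require Import Reals.
From Coquelicot Require Import Coquelicot.
Open Scope R_scope.

Definition is_solution (r1 r2 mu a12 a13 a21 a31 : R) (u v w : R -> R) : Prop :=
  filterlim u (at_right 0) (locally (u 0)) /\
  filterlim v (at_right 0) (locally (v 0)) /\
  filterlim w (at_right 0) (locally (w 0)) /\
  forall t, 0 < t ->
    is_derive u t (r1 * u t * (1 - u t) - a12 * u t * v t - a13 * u t * w t) /\
    is_derive v t (r2 * v t * (1 - v t) + a21 * u t * v t) /\
    is_derive w t (- mu * w t + a31 * u t * w t).

Definition dist3 (x1 x2 x3 y1 y2 y3 : R) : R :=
  sqrt ((x1 - y1) ^ 2 + (x2 - y2) ^ 2 + (x3 - y3) ^ 2).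

Definition u12 (r1 r2 a12 a21 : R) : R :=
  r2 * (r1 - a12) / (r1 * r2 + a12 * a21).
Definition v12 (r1 r2 a12 a21 : R) : R :=
  (r1 * r2 + r1 * a21) / (r1 * r2 + a12 * a21).

From Stdlib Require Import Reals Lra Psatz Classical.
From Coquelicot Require Import Coquelicot.
Open Scope R_scope.

(* With the Volterra function  Phi_s(x) = x - s - s ln (x / s),  which is >= 0 and vanishes
   only at x = s, the function
     V = a21 a31 Phi_us(u) + a12 a31 Phi_vs(v) + a13 a21 w
   is a Lyapunov function: its weights make every mixed term cancel, and along solutions
     V' = - a21 a31 r1 (u - us)^2 - a12 a31 r2 (v - vs)^2 - a13 a21 (mu - a31 us) w <= 0.
   Since Phi_s controls |x - s| from both sides, monotonicity of V gives stability.  V also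
   bounds the solution, hence the vector field, so the solution is Lipschitz; a Barbalat-type
   argument turns the dissipation of V into u -> us, v -> vs, and then, since u converges
   while w >= e would force u to decrease at a fixed rate, into w -> 0.  The signs of u, v, w
   are preserved because each equation reads y' = k y with k locally bounded. *)

Lemma ln_le_sub_1 z : 0 < z -> ln z <= z - 1.
Proof. intros Hz. pose proof (exp_ineq1_le (ln z)) as H. rewrite exp_ln in H; lra. Qed.

Lemma sq_le_of_le_abs e x : 0 <= e -> e <= Rabs x -> e ^ 2 <= x ^ 2.
Proof. intros He H. rewrite <- (pow2_abs x). apply pow_incr. split; assumption. Qed.

Definition volterra (xs x : R) : R := x - xs - xs * (ln x - ln xs).

Section Volterra.

Variable xs : R.
Hypothesis xs_pos : 0 < xs.

Lemma volterra_eq_at_ratio x : 0 < x -> volterra xs x = xs * (x / xs - 1 - ln (x / xs)).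
Proof. intros Hx. unfold volterra. rewrite ln_div by lra. field. lra. Qed.

Lemma volterra_nonneg x : 0 < x -> 0 <= volterra xs x.
Proof.
  intros Hx. rewrite volterra_eq_at_ratio by lra.
  pose proof (ln_le_sub_1 (x / xs) ltac:(apply Rdiv_lt_0_compat; lra)). nra.
Qed.

Lemma volterra_ge_half x : 0 < x -> x / 2 - xs * ln 2 <= volterra xs x.
Proof.
  intros Hx. unfold volterra.
  pose proof (ln_le_sub_1 (x / (2 * xs)) ltac:(apply Rdiv_lt_0_compat; lra)) as H.
  rewrite ln_div, ln_mult in H by lra.
  enough (xs * (ln x - (ln 2 + ln xs)) <= x / 2 - xs) by lra.
  replace (x / 2 - xs) with (xs * (x / (2 * xs) - 1)) by (field; lra).
  apply Rmult_le_compat_l; lra.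
Qed.

Lemma volterra_ge_sqrt x : 0 < x -> (sqrt x - sqrt xs) ^ 2 <= volterra xs x.
Proof.
  intros Hx.
  pose proof (sqrt_lt_R0 x Hx) as Px. pose proof (sqrt_lt_R0 xs xs_pos) as Ps.
  pose proof (sqrt_sqrt x (Rlt_le _ _ Hx)) as Ex.
  pose proof (sqrt_sqrt xs (Rlt_le _ _ xs_pos)) as Es.
  assert (Hq : 0 < sqrt x / sqrt xs) by (apply Rdiv_lt_0_compat; lra).
  pose proof (ln_le_sub_1 _ Hq) as H.
  assert (Hln : ln x - ln xs = 2 * ln (sqrt x / sqrt xs)).
  { rewrite ln_div by lra. rewrite <- Ex at 1. rewrite <- Es at 1.
    rewrite !ln_mult by lra. ring. }
  unfold volterra. rewrite Hln.
  assert (Hlin : xs * ln (sqrt x / sqrt xs) <= xs * (sqrt x / sqrt xs - 1))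
    by (apply Rmult_le_compat_l; lra).
  set (a := sqrt x) in *. set (b := sqrt xs) in *.
  replace (xs * (a / b - 1)) with (b * a - xs) in Hlin by (rewrite <- Es; field; lra).
  nra.
Qed.

Lemma volterra_le_bound x M : 0 < x -> volterra xs x <= M -> x <= 2 * (M + xs * ln 2).
Proof. intros Hx HM. pose proof (volterra_ge_half x Hx). lra. Qed.

Lemma is_derive_volterra x : 0 < x -> is_derive (volterra xs) x (1 - xs / x).
Proof. intros Hx. unfold volterra. auto_derive; [lra | field; lra]. Qed.

Lemma volterra_small_close eta : 0 < eta ->
  exists m, 0 < m /\ forall x, 0 < x -> volterra xs x < m -> Rabs (x - xs) < eta.
Proof.
  intros Heta. exists (Rmin xs (eta ^ 2 / (9 * xs))).
  split; [apply Rmin_glb_lt; [lra | apply Rdiv_lt_0_compat; nra] |].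
  intros x Hx Hv.
  pose proof (volterra_ge_sqrt x Hx) as Hs.
  pose proof (Rmin_l xs (eta ^ 2 / (9 * xs))). pose proof (Rmin_r xs (eta ^ 2 / (9 * xs))).
  pose proof (sqrt_pos x) as Px. pose proof (sqrt_lt_R0 xs xs_pos) as Ps.
  pose proof (sqrt_sqrt x (Rlt_le _ _ Hx)) as Ex.
  pose proof (sqrt_sqrt xs (Rlt_le _ _ xs_pos)) as Es.
  set (a := sqrt x) in *. set (b := sqrt xs) in *.
  (* |x - xs| = |a - b| (a + b) with a < 2 b, so (x - xs)^2 < 9 xs (a - b)^2 *)
  assert (Hab : (a - b) ^ 2 * (9 * xs) < eta ^ 2).
  { apply Rlt_le_trans with (eta ^ 2 / (9 * xs) * (9 * xs)); [|right; field; lra].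
    apply Rmult_lt_compat_r; lra. }
  assert (H2 : (x - xs) ^ 2 < eta ^ 2).
  { rewrite <- Ex, <- Es. replace ((a * a - b * b) ^ 2) with ((a - b) ^ 2 * (a + b) ^ 2) by ring.
    assert (Hd : (a - b) ^ 2 < b * b) by lra.
    assert (Hs2 : (a + b) ^ 2 <= 9 * xs) by nra.
    assert ((a - b) ^ 2 * (a + b) ^ 2 <= (a - b) ^ 2 * (9 * xs))
      by (apply Rmult_le_compat_l; [apply pow2_ge_0 | lra]).
    lra. }
  apply Rnot_le_lt. intros Hc. pose proof (sq_le_of_le_abs eta (x - xs) ltac:(lra) Hc). lra.
Qed.

Lemma volterra_continuous x : 0 < x -> continuous (volterra xs) x.
Proof.
  intros Hx. apply (@ex_derive_continuous R_AbsRing R_NormedModule).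
  unfold volterra. auto_derive. lra.
Qed.

Lemma volterra_near_small m : 0 < m ->
  exists rho, 0 < rho /\ forall x, Rabs (x - xs) < rho -> 0 < x /\ volterra xs x < m.
Proof.
  intros Hm.
  destruct (proj1 (filterlim_locally _ _) (volterra_continuous xs xs_pos) (mkposreal m Hm))
    as [d Hd].
  exists (Rmin d xs). split; [apply Rmin_glb_lt; [apply cond_pos | lra] |].
  intros x Hx. pose proof (Rmin_l d xs). pose proof (Rmin_r d xs).
  assert (Hxp : 0 < x) by (apply Rabs_def2 in Hx; lra). split; [exact Hxp|].
  assert (Hball : ball xs d x) by (change (Rabs (x - xs) < d); lra).
  specialize (Hd x Hball). change (Rabs (volterra xs x - volterra xs xs) < m) in Hd.
  replace (volterra xs xs) with 0 in Hd by (unfold volterra; ring).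
  pose proof (volterra_nonneg x Hxp).
  rewrite Rminus_0_r, Rabs_right in Hd by lra. exact Hd.
Qed.

End Volterra.

Lemma sub_le_of_deriv_le (f df : R -> R) a b K : a <= b ->
  (forall c, a <= c <= b -> is_derive f c (df c)) -> (forall c, a <= c <= b -> df c <= K) ->
  f b - f a <= K * (b - a).
Proof.
  intros Hab Hd HK. destruct (Req_dec a b) as [<-|Hne]; [lra|].
  destruct (MVT_cor2 f df a b ltac:(lra)) as [c [Hc Hcab]].
  - intros c Hc. apply is_derive_Reals. auto.
  - rewrite Hc. apply Rmult_le_compat_r; [lra|]. apply HK; lra.
Qed.

Lemma abs_sub_le_of_deriv_le (f df : R -> R) a b K : a <= b ->
  (forall c, a <= c <= b -> is_derive f c (df c)) -> (forall c, a <= c <= b -> Rabs (df c) <= K) ->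
  Rabs (f b - f a) <= K * (b - a).
Proof.
  intros Hab Hd HK. apply Rabs_le. split.
  - pose proof (sub_le_of_deriv_le (fun t => - f t) (fun t => - df t) a b K Hab
      ltac:(intros c Hc; exact (is_derive_opp f c (df c) (Hd c Hc)))
      ltac:(intros c Hc; specialize (HK c Hc); apply Rabs_le_between in HK; lra)).
    lra.
  - apply (sub_le_of_deriv_le f df a b K Hab Hd).
    intros c Hc. specialize (HK c Hc). apply Rabs_le_between in HK. lra.
Qed.

Lemma le_of_deriv_nonpos (f df : R -> R) a b : a <= b ->
  filterlim f (at_right a) (locally (f a)) ->
  (forall c, a < c <= b -> is_derive f c (df c)) -> (forall c, a < c <= b -> df c <= 0) ->
  f b <= f a.
Proof.
  intros Hab Hlim Hd Hneg. destruct (Req_dec a b) as [<-|Hne]; [lra|].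
  assert (Hr : forall r, a < r <= b -> f b <= f r).
  { intros r Hr.
    pose proof (sub_le_of_deriv_le f df r b 0 ltac:(lra)
      ltac:(intros c Hc; apply Hd; lra) ltac:(intros c Hc; apply Hneg; lra)). lra. }
  apply (closed_filterlim_loc f (fun x => f b <= x) (f a) Hlim); [|apply closed_ge].
  exists (mkposreal (b - a) ltac:(lra)). intros r Hball Har. apply Hr.
  change (Rabs (r - a) < b - a) in Hball. apply Rabs_def2 in Hball. lra.
Qed.

Section FilterArith.

Context {T : Type} {F : (T -> Prop) -> Prop} {FF : Filter F}.

Lemma filterlim_Rplus (f g : T -> R) a b :
  filterlim f F (locally a) -> filterlim g F (locally b) ->
  filterlim (fun x => f x + g x) F (locally (a + b)).
Proof. intros Hf Hg. exact (filterlim_comp_2 f g Rplus Hf Hg (filterlim_plus a b)). Qed.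

Lemma filterlim_Rmult (f g : T -> R) a b :
  filterlim f F (locally a) -> filterlim g F (locally b) ->
  filterlim (fun x => f x * g x) F (locally (a * b)).
Proof. intros Hf Hg. exact (filterlim_comp_2 f g Rmult Hf Hg (filterlim_mult a b)). Qed.

End FilterArith.

Lemma within_nonneg_spec (P : R -> Prop) t :
  within (Rle 0) (locally t) P <->
  exists d, 0 < d /\ forall s, 0 <= s -> Rabs (s - t) < d -> P s.
Proof.
  split.
  - intros [d Hd]. exists d. split; [apply cond_pos|]. intros s Hs Hst. apply Hd; auto.
  - intros [d [Hd HP]]. exists (mkposreal d Hd). intros s Hball Hs. apply HP; auto.
Qed.

Lemma filter_le_at_right_within t : 0 <= t ->
  filter_le (at_right t) (within (Rle 0) (locally t)).
Proof.
  intros Ht P HP. unfold at_right, within in *. revert HP. apply filter_imp.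
  intros s HPs Hs. apply HPs. lra.
Qed.

(* Solutions are only known to be right-continuous at 0, so continuity is taken within
   [0, +oo). *)
Definition continuous_nonneg (f : R -> R) : Prop :=
  forall t, 0 <= t -> filterlim f (within (Rle 0) (locally t)) (locally (f t)).

Lemma continuous_nonneg_intro (f : R -> R) :
  filterlim f (at_right 0) (locally (f 0)) -> (forall t, 0 < t -> ex_derive f t) ->
  continuous_nonneg f.
Proof.
  intros H0 Hd t Ht. destruct (Req_dec t 0) as [->|Hne].
  - intros P HP. specialize (H0 P HP). unfold filtermap, at_right in *; unfold within in *.
    revert H0. apply filter_imp.
    intros s Hs Hs0. destruct (Req_dec s 0) as [->|Hs1].
    + exact (locally_singleton _ _ HP).
    + apply Hs. lra.
  - apply (filterlim_filter_le_1 f (filter_le_within _)).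
    apply (@ex_derive_continuous R_AbsRing R_NormedModule). apply Hd. lra.
Qed.

Lemma right_continuous_of_nonneg (f : R -> R) t : continuous_nonneg f -> 0 <= t ->
  filterlim f (at_right t) (locally (f t)).
Proof.
  intros Hf Ht. exact (filterlim_filter_le_1 f (filter_le_at_right_within t Ht) (Hf t Ht)).
Qed.

Lemma continuous_nonneg_affine (f g h : R -> R) c0 c1 c2 c3 :
  continuous_nonneg f -> continuous_nonneg g -> continuous_nonneg h ->
  continuous_nonneg (fun t => c0 + c1 * f t + c2 * g t + c3 * h t).
Proof.
  intros Hf Hg Hh t Ht.
  repeat apply filterlim_Rplus; try apply filterlim_const;
    apply (filterlim_Rmult (fun _ => _)); auto; apply filterlim_const.
Qed.

Lemma is_derive_eq (f : R -> R) (x l l' : R) : is_derive f x l -> l = l' -> is_derive f x l'.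
Proof. intros H <-. exact H. Qed.

Lemma sq_exp_monotone (y k : R -> R) a b c sigma : a <= b ->
  filterlim y (at_right a) (locally (y a)) ->
  (forall s, a < s <= b -> is_derive y s (k s * y s)) ->
  (forall s, a < s <= b -> sigma * (2 * k s + c) <= 0) ->
  sigma * (y b * y b * exp (c * b)) <= sigma * (y a * y a * exp (c * a)).
Proof.
  intros Hab Hy Hd Hk.
  assert (Hexp : forall s, is_derive (fun s => exp (c * s)) s (c * exp (c * s)))
    by (intros s; auto_derive; auto; ring).
  apply (le_of_deriv_nonpos (fun s => sigma * (y s * y s * exp (c * s)))
    (fun s => y s * y s * exp (c * s) * (sigma * (2 * k s + c)))).
  - exact Hab.
  - apply (filterlim_Rmult (fun _ => sigma)); [apply filterlim_const|].
    apply filterlim_Rmult; [apply filterlim_Rmult; exact Hy|].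
    apply (filterlim_filter_le_1 _ (filter_le_within _)).
    apply (@ex_derive_continuous R_AbsRing R_NormedModule (fun s => exp (c * s))).
    eexists. apply Hexp.
  - intros s Hs. eapply is_derive_eq.
    + apply (is_derive_scal (fun s => y s * y s * exp (c * s))).
      apply (is_derive_mult (fun s => y s * y s)); [|apply Hexp|exact Rmult_comm].
      apply (is_derive_mult y y); [apply Hd; lra | apply Hd; lra | exact Rmult_comm].
    + simpl. unfold plus, mult, scal; simpl. unfold mult; simpl. ring.
  - intros s Hs. specialize (Hk s Hs). pose proof (exp_pos (c * s)).
    assert (0 <= y s * y s * exp (c * s)) by (apply Rmult_le_pos; [nra | lra]).
    nra.
Qed.

Lemma zero_propagates (y k : R -> R) a b M : a <= b ->
  filterlim y (at_right a) (locally (y a)) ->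
  (forall s, a < s <= b -> is_derive y s (k s * y s)) ->
  (forall s, a < s <= b -> Rabs (k s) <= M) ->
  y a = 0 <-> y b = 0.
Proof.
  intros Hab Hy Hd HM.
  assert (Hk : forall s, a < s <= b -> - M <= k s <= M)
    by (intros s Hs; apply Rabs_le_between, HM, Hs).
  pose proof (exp_pos (-2 * M * a)). pose proof (exp_pos (-2 * M * b)).
  pose proof (exp_pos (2 * M * a)). pose proof (exp_pos (2 * M * b)).
  split; intros Hz.
  - pose proof (sq_exp_monotone y k a b (-2 * M) 1 Hab Hy Hd
      ltac:(intros s Hs; specialize (Hk s Hs); lra)) as Hmon.
    rewrite Hz in Hmon. apply NNPP. intros Hnz. pose proof (Rsqr_pos_lt _ Hnz).
    unfold Rsqr in *. nra.
  - pose proof (sq_exp_monotone y k a b (2 * M) (-1) Hab Hy Hd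
      ltac:(intros s Hs; specialize (Hk s Hs); lra)) as Hmon.
    rewrite Hz in Hmon. apply NNPP. intros Hnz. pose proof (Rsqr_pos_lt _ Hnz).
    unfold Rsqr in *. nra.
Qed.

Lemma constant_of_locally_constant (f : R -> R) :
  (forall t, 0 <= t -> within (Rle 0) (locally t) (fun s => f s = f t)) ->
  forall t, 0 <= t -> f t = f 0.
Proof.
  intros Hloc t1 Ht1. apply NNPP. intros Hne.
  set (E := fun t => 0 <= t <= t1 /\ forall s, 0 <= s <= t -> f s = f 0).
  assert (E0 : E 0) by (split; [lra | intros s Hs; f_equal; lra]).
  destruct (completeness E) as [m [Hub Hlub]].
  { exists t1. intros t Et. apply Et. }
  { exists 0. exact E0. }
  assert (Hm : 0 <= m <= t1) by (split; [apply Hub, E0 | apply Hlub; intros t Et; apply Et]).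
  assert (Hbelow : forall s, 0 <= s < m -> f s = f 0).
  { intros s Hs. destruct (classic (exists t, E t /\ s <= t)) as [[t [Et Hst]]|Hno].
    - apply Et. lra.
    - exfalso. enough (m <= s) by lra. apply Hlub. intros t Et.
      apply Rnot_lt_le. intros Hst. apply Hno. exists t. split; [exact Et | lra]. }
  destruct (proj1 (within_nonneg_spec _ _) (Hloc m (proj1 Hm))) as [d [Hd Hfd]].
  assert (Hfm : f m = f 0).
  { destruct (Req_dec m 0) as [->|Hm0]; [reflexivity|].
    assert (Hmin : 0 < Rmin d m) by (apply Rmin_glb_lt; lra).
    pose proof (Rmin_l d m). pose proof (Rmin_r d m).
    rewrite <- (Hfd (m - Rmin d m / 2)); [apply Hbelow; lra | lra |].
    rewrite Rabs_left; lra. }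
  assert (Hnear : forall s, 0 <= s < m + d -> f s = f 0).
  { intros s Hs. destruct (Rlt_le_dec s m); [apply Hbelow; lra|].
    rewrite Hfd; [exact Hfm | lra | rewrite Rabs_right; lra]. }
  destruct (Rlt_le_dec t1 (m + d)) as [Hlt|Hle].
  - apply Hne, Hnear. lra.
  - enough (m + d / 2 <= m) by lra. apply Hub.
    split; [lra | intros s Hs; apply Hnear; lra].
Qed.

Lemma sign_eq_of_near a b : b <> 0 -> Rabs (a - b) < Rabs b -> sign a = sign b.
Proof.
  intros Hb H. apply Rabs_def2 in H. destruct (Rlt_or_le 0 b) as [Hpos|Hneg].
  - rewrite Rabs_right in H by lra. rewrite !sign_eq_1; lra.
  - rewrite Rabs_left in H by lra. rewrite !sign_eq_m1; lra.
Qed.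

Lemma sign_preserved (y k : R -> R) :
  continuous_nonneg y -> continuous_nonneg k ->
  (forall t, 0 < t -> is_derive y t (k t * y t)) ->
  forall t, 0 <= t -> sign (y t) = sign (y 0).
Proof.
  intros Hy Hk Hd. apply constant_of_locally_constant. intros t Ht.
  destruct (Req_dec (y t) 0) as [Hz|Hnz].
  - destruct (proj1 (within_nonneg_spec _ t)
      (proj1 (filterlim_locally _ _) (Hk t Ht) (mkposreal 1 Rlt_0_1))) as [d [Hd0 Hkd]].
    apply within_nonneg_spec. exists d. split; [exact Hd0|]. intros s Hs Hsd.
    assert (HM : forall r, 0 <= r -> Rabs (r - t) < d -> Rabs (k r) <= Rabs (k t) + 1).
    { intros r Hr Hrt. specialize (Hkd r Hr Hrt). change (Rabs (k r - k t) < 1) in Hkd.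
      pose proof (Rabs_triang_inv (k r) (k t)). lra. }
    rewrite Hz. f_equal. destruct (Rle_lt_dec t s) as [Hts|Hst].
    + apply (zero_propagates y k t s (Rabs (k t) + 1) Hts); auto.
      * apply right_continuous_of_nonneg; auto.
      * intros r Hr. apply Hd. lra.
      * intros r Hr. apply HM; [lra|]. apply Rabs_def2 in Hsd. apply Rabs_def1; lra.
    + apply (zero_propagates y k s t (Rabs (k t) + 1)); auto; [lra | | | ].
      * apply right_continuous_of_nonneg; auto.
      * intros r Hr. apply Hd. lra.
      * intros r Hr. apply HM; [lra|]. apply Rabs_def2 in Hsd. apply Rabs_def1; lra.
  - assert (Hpos : 0 < Rabs (y t)) by (apply Rabs_pos_lt, Hnz).
    generalize (proj1 (filterlim_locally _ _) (Hy t Ht) (mkposreal _ Hpos)).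
    apply filter_imp. intros s Hs. apply sign_eq_of_near; [exact Hnz | exact Hs].
Qed.

Lemma pos_of_sign_eq a b : sign a = sign b -> 0 < b -> 0 < a.
Proof.
  intros H Hb. rewrite (sign_eq_1 b Hb) in H. apply Rnot_le_lt. intros Ha.
  pose proof (sign_le_0 a Ha). lra.
Qed.

Lemma nonneg_of_sign_eq a b : sign a = sign b -> 0 <= b -> 0 <= a.
Proof.
  intros H Hb. apply Rnot_lt_le. intros Ha. rewrite (sign_eq_m1 a Ha) in H.
  pose proof (sign_ge_0 b Hb). lra.
Qed.

Lemma is_lim_p_infty_spec (f : R -> R) (l : R) :
  is_lim f p_infty l <-> forall e, 0 < e -> exists T, forall t, T <= t -> Rabs (f t - l) < e.
Proof.
  rewrite <- is_lim_spec. split.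
  - intros H e He. destruct (H (mkposreal e He)) as [T HT].
    exists (T + 1). intros t Ht. apply HT. lra.
  - intros H eps. destruct (H eps (cond_pos eps)) as [T HT].
    exists T. intros t Ht. apply HT. lra.
Qed.

Definition cauchy_at_infty (G : R -> R) : Prop :=
  forall d, 0 < d -> exists T, forall s t, T <= s -> T <= t -> Rabs (G s - G t) < d.

Lemma cauchy_of_is_lim (G : R -> R) (l : R) : is_lim G p_infty l -> cauchy_at_infty G.
Proof.
  intros H d Hd. destruct (proj1 (is_lim_p_infty_spec G l) H (d / 2) ltac:(lra)) as [T HT].
  exists T. intros s t Hs Ht. specialize (HT s Hs) as Hs'. specialize (HT t Ht).
  apply Rabs_def2 in Hs'. apply Rabs_def2 in HT. apply Rabs_def1; lra.
Qed.

Lemma cauchy_of_nonincreasing (G : R -> R) T0 L :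
  (forall s t, T0 <= s <= t -> G t <= G s) -> (forall t, T0 <= t -> L <= G t) ->
  cauchy_at_infty G.
Proof.
  intros Hmon Hlow d Hd.
  set (E := fun x => exists t, T0 <= t /\ x = - G t).
  destruct (completeness E) as [m [Hub Hlub]].
  { exists (- L). intros x [t [Ht ->]]. specialize (Hlow t Ht). lra. }
  { exists (- G T0), T0. split; [lra | reflexivity]. }
  destruct (classic (exists t, T0 <= t /\ m - d < - G t)) as [[T [HT HmT]]|Hno].
  - exists T. intros s t Hs Ht.
    assert (- G s <= m) by (apply Hub; exists s; split; [lra | reflexivity]).
    assert (- G t <= m) by (apply Hub; exists t; split; [lra | reflexivity]).
    assert (G s <= G T) by (apply Hmon; lra). assert (G t <= G T) by (apply Hmon; lra).
    apply Rabs_def1; lra.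
  - exfalso. enough (m <= m - d) by lra. apply Hlub. intros x [t [Ht ->]].
    apply Rnot_lt_le. intros Hlt. apply Hno. exists t. split; [exact Ht | lra].
Qed.

Lemma is_lim_of_dissipation (y G : R -> R) (l : R) T0 K : 0 < K ->
  (forall s t, T0 <= s <= t -> Rabs (y t - y s) <= K * (t - s)) ->
  cauchy_at_infty G ->
  (forall e, 0 < e -> exists c T1, 0 < c /\ forall s t, T1 <= s <= t ->
     (forall r, s <= r <= t -> e <= Rabs (y r - l)) -> c * (t - s) <= G s - G t) ->
  is_lim y p_infty l.
Proof.
  intros HK Hlip HG Hdiss. apply is_lim_p_infty_spec. intros e He.
  destruct (Hdiss (e / 2) ltac:(lra)) as [c [T1 [Hc Hdrop]]].
  (* once |y t - l| >= e, it stays >= e/2 for a time tau, during which G drops by c tau *)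
  set (tau := e / (2 * K)).
  assert (Htau : 0 < tau) by (unfold tau; apply Rdiv_lt_0_compat; lra).
  assert (HKtau : K * tau = e / 2) by (unfold tau; field; lra).
  destruct (HG (c * tau) ltac:(nra)) as [T HT].
  exists (Rmax T0 (Rmax T T1)). intros t Ht.
  pose proof (Rmax_l T0 (Rmax T T1)). pose proof (Rmax_r T0 (Rmax T T1)).
  pose proof (Rmax_l T T1). pose proof (Rmax_r T T1).
  apply Rnot_le_lt. intros Hy.
  assert (Hstay : forall r, t <= r <= t + tau -> e / 2 <= Rabs (y r - l)).
  { intros r Hr. specialize (Hlip t r ltac:(lra)).
    assert (K * (r - t) <= K * tau) by (apply Rmult_le_compat_l; lra).
    pose proof (Rabs_triang_inv (y t - l) (y t - y r)) as Htri.
    replace (y t - l - (y t - y r)) with (y r - l) in Htri by ring.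
    rewrite Rabs_minus_sym in Hlip. lra. }
  specialize (Hdrop t (t + tau) ltac:(lra) Hstay).
  specialize (HT t (t + tau) ltac:(lra) ltac:(lra)).
  apply Rabs_def2 in HT. lra.
Qed.

Lemma dist3_coords a b c x y z d : dist3 a b c x y z < d ->
  Rabs (a - x) < d /\ Rabs (b - y) < d /\ Rabs (c - z) < d.
Proof.
  unfold dist3. intros H.
  assert (Habs : forall p q, p ^ 2 <= q -> Rabs p <= sqrt q).
  { intros p q Hpq. rewrite <- (sqrt_pow2 (Rabs p)) by apply Rabs_pos.
    rewrite pow2_abs. apply sqrt_le_1_alt, Hpq. }
  pose proof (pow2_ge_0 (a - x)). pose proof (pow2_ge_0 (b - y)). pose proof (pow2_ge_0 (c - z)).
  repeat split; (eapply Rle_lt_trans; [apply Habs | exact H]); lra.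
Qed.

Lemma dist3_lt a b c x y z e : 0 < e ->
  Rabs (a - x) < e / 2 -> Rabs (b - y) < e / 2 -> Rabs (c - z) < e / 2 -> dist3 a b c x y z < e.
Proof.
  intros He H1 H2 H3. unfold dist3. rewrite <- (sqrt_pow2 e) by lra.
  pose proof (pow2_ge_0 (a - x)). pose proof (pow2_ge_0 (b - y)). pose proof (pow2_ge_0 (c - z)).
  apply sqrt_lt_1; [lra | nra |].
  rewrite <- (pow2_abs (a - x)), <- (pow2_abs (b - y)), <- (pow2_abs (c - z)).
  pose proof (Rabs_pos (a - x)). pose proof (Rabs_pos (b - y)). pose proof (Rabs_pos (c - z)).
  nra.
Qed.

Lemma exists_pos_below3 a b c : 0 < a -> 0 < b -> 0 < c ->
  exists d, 0 < d /\ d <= a /\ d <= b /\ d <= c.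
Proof.
  intros Ha Hb Hc. exists (Rmin a (Rmin b c)).
  pose proof (Rmin_l a (Rmin b c)). pose proof (Rmin_r a (Rmin b c)).
  pose proof (Rmin_l b c). pose proof (Rmin_r b c).
  repeat split; try lra. repeat apply Rmin_glb_lt; lra.
Qed.

Section Model.

Variables r1 r2 mu a12 a13 a21 a31 : R.
Hypotheses (hr1 : 0 < r1) (hr2 : 0 < r2) (hmu : 0 < mu) (ha12 : 0 < a12)
  (ha13 : 0 < a13) (ha21 : 0 < a21) (ha31 : 0 < a31).

Lemma vector_field_bounded B : 0 <= B -> exists K, 0 < K /\
  forall x y z, 0 <= x <= B -> 0 <= y <= B -> 0 <= z <= B ->
  Rabs (r1 * x * (1 - x) - a12 * x * y - a13 * x * z) <= K /\
  Rabs (r2 * y * (1 - y) + a21 * x * y) <= K /\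
  Rabs (- mu * z + a31 * x * z) <= K.
Proof.
  intros HB. exists ((r1 + r2 + mu + (r1 + r2 + a12 + a13 + a21 + a31) * B) * B + 1).
  split.
  { assert (0 <= (r1 + r2 + a12 + a13 + a21 + a31) * B) by (apply Rmult_le_pos; lra).
    assert (0 <= (r1 + r2 + mu + (r1 + r2 + a12 + a13 + a21 + a31) * B) * B)
      by (apply Rmult_le_pos; lra).
    lra. }
  intros x y z Hx Hy Hz.
  assert (Hprod : forall c p q, 0 <= c -> 0 <= p <= B -> 0 <= q <= B ->
    0 <= c * (p * q) <= c * (B * B)).
  { intros c p q Hc Hp Hq. split; [apply Rmult_le_pos; nra|].
    apply Rmult_le_compat_l; [lra | apply Rmult_le_compat; lra]. }
  assert (Hlin : forall c p, 0 <= c -> 0 <= p <= B -> 0 <= c * p <= c * B)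
    by (intros c p Hc Hp; split; [apply Rmult_le_pos|apply Rmult_le_compat_l]; lra).
  pose proof (Hprod r1 x x ltac:(lra) Hx Hx). pose proof (Hprod a12 x y ltac:(lra) Hx Hy).
  pose proof (Hprod a13 x z ltac:(lra) Hx Hz). pose proof (Hprod r2 y y ltac:(lra) Hy Hy).
  pose proof (Hprod a21 x y ltac:(lra) Hx Hy). pose proof (Hprod a31 x z ltac:(lra) Hx Hz).
  pose proof (Hlin r1 x ltac:(lra) Hx). pose proof (Hlin r2 y ltac:(lra) Hy).
  pose proof (Hlin mu z ltac:(lra) Hz).
  repeat split; apply Rabs_le; split; nra.
Qed.

Variables us vs : R.
Hypotheses (us_pos : 0 < us) (vs_pos : 0 < vs)
  (us_eq : r1 * (1 - us) - a12 * vs = 0) (vs_eq : r2 * (1 - vs) + a21 * us = 0)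
  (mu_ge : a31 * us <= mu).

Definition lyapunov (x y z : R) : R :=
  a21 * a31 * volterra us x + a12 * a31 * volterra vs y + a13 * a21 * z.

Definition lyapunov_rate (x y z : R) : R :=
  a21 * a31 * r1 * (x - us) ^ 2 + a12 * a31 * r2 * (y - vs) ^ 2
  + a13 * a21 * (mu - a31 * us) * z.

Lemma lyapunov_orbital_derivative x y z : 0 < x -> 0 < y ->
  a21 * a31 * ((r1 * x * (1 - x) - a12 * x * y - a13 * x * z) * (1 - us / x))
  + a12 * a31 * ((r2 * y * (1 - y) + a21 * x * y) * (1 - vs / y))
  + a13 * a21 * (- mu * z + a31 * x * z) = - lyapunov_rate x y z.
Proof.
  intros Hx Hy. unfold lyapunov_rate. apply Rminus_diag_uniq.
  transitivity (a21 * a31 * (x - us) * (r1 * (1 - us) - a12 * vs)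
    + a12 * a31 * (y - vs) * (r2 * (1 - vs) + a21 * us)).
  - field. lra.
  - rewrite us_eq, vs_eq. ring.
Qed.

Lemma lyapunov_terms_nonneg x y z : 0 < x -> 0 < y -> 0 <= z ->
  0 <= a21 * a31 * volterra us x /\ 0 <= a12 * a31 * volterra vs y /\ 0 <= a13 * a21 * z.
Proof.
  intros Hx Hy Hz.
  pose proof (volterra_nonneg us us_pos x Hx). pose proof (volterra_nonneg vs vs_pos y Hy).
  repeat split; apply Rmult_le_pos; nra.
Qed.

Lemma lyapunov_rate_ge x y z : 0 <= z ->
  0 <= lyapunov_rate x y z /\
  a21 * a31 * r1 * (x - us) ^ 2 <= lyapunov_rate x y z /\
  a12 * a31 * r2 * (y - vs) ^ 2 <= lyapunov_rate x y z.
Proof.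
  intros Hz. unfold lyapunov_rate.
  pose proof (pow2_ge_0 (x - us)). pose proof (pow2_ge_0 (y - vs)).
  assert (0 < a21 * a31 * r1) by (repeat apply Rmult_lt_0_compat; assumption).
  assert (0 < a12 * a31 * r2) by (repeat apply Rmult_lt_0_compat; assumption).
  assert (0 <= a13 * a21 * (mu - a31 * us)) by (apply Rmult_le_pos; nra).
  assert (0 <= a21 * a31 * r1 * (x - us) ^ 2) by (apply Rmult_le_pos; lra).
  assert (0 <= a12 * a31 * r2 * (y - vs) ^ 2) by (apply Rmult_le_pos; lra).
  assert (0 <= a13 * a21 * (mu - a31 * us) * z) by (apply Rmult_le_pos; lra).
  repeat split; lra.
Qed.

Lemma lyapunov_small_close eps : 0 < eps -> exists m, 0 < m /\
  forall x y z, 0 < x -> 0 < y -> 0 <= z -> lyapunov x y z < m -> dist3 x y z us vs 0 < eps.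
Proof.
  intros Heps.
  assert (HA : 0 < a21 * a31) by nra. assert (HB : 0 < a12 * a31) by nra.
  assert (HC : 0 < a13 * a21) by nra.
  destruct (volterra_small_close us us_pos (eps / 2) ltac:(lra)) as [mu_u [Hmu_u Hclose_u]].
  destruct (volterra_small_close vs vs_pos (eps / 2) ltac:(lra)) as [mu_v [Hmu_v Hclose_v]].
  destruct (exists_pos_below3 (a21 * a31 * mu_u) (a12 * a31 * mu_v) (a13 * a21 * (eps / 2)))
    as [m [Hm [Hmu [Hmv Hmw]]]]; [nra | nra | nra |].
  exists m. split; [exact Hm|]. intros x y z Hx Hy Hz HV.
  destruct (lyapunov_terms_nonneg x y z Hx Hy Hz) as [T1 [T2 T3]]. unfold lyapunov in HV.
  apply dist3_lt; [exact Heps | | |].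
  - apply Hclose_u; [exact Hx|]. apply (Rmult_lt_reg_l (a21 * a31)); lra.
  - apply Hclose_v; [exact Hy|]. apply (Rmult_lt_reg_l (a12 * a31)); lra.
  - rewrite Rminus_0_r, Rabs_right by lra. apply (Rmult_lt_reg_l (a13 * a21)); lra.
Qed.

Lemma lyapunov_near_small m : 0 < m -> exists delta, 0 < delta /\
  forall x y z, 0 <= z -> dist3 x y z us vs 0 < delta -> 0 < x /\ 0 < y /\ lyapunov x y z < m.
Proof.
  intros Hm.
  assert (HA : 0 < a21 * a31) by nra. assert (HB : 0 < a12 * a31) by nra.
  assert (HC : 0 < a13 * a21) by nra.
  destruct (volterra_near_small us us_pos (m / (3 * (a21 * a31)))
    ltac:(apply Rdiv_lt_0_compat; lra)) as [rho_u [Hrho_u Hnear_u]].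
  destruct (volterra_near_small vs vs_pos (m / (3 * (a12 * a31)))
    ltac:(apply Rdiv_lt_0_compat; lra)) as [rho_v [Hrho_v Hnear_v]].
  destruct (exists_pos_below3 rho_u rho_v (m / (3 * (a13 * a21))))
    as [delta [Hdelta [Hdu [Hdv Hdw]]]]; [lra | lra | apply Rdiv_lt_0_compat; lra |].
  exists delta. split; [exact Hdelta|]. intros x y z Hz Hdist.
  destruct (dist3_coords _ _ _ _ _ _ _ Hdist) as [Dx [Dy Dz]].
  destruct (Hnear_u x ltac:(lra)) as [Px Vx]. destruct (Hnear_v y ltac:(lra)) as [Py Vy].
  rewrite Rminus_0_r, Rabs_right in Dz by lra.
  assert (Hscale : forall c p, 0 < c -> p < m / (3 * c) -> c * p < m / 3).
  { intros c p Hc Hp. apply Rlt_le_trans with (c * (m / (3 * c))); [apply Rmult_lt_compat_l; lra|].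
    right. field. lra. }
  pose proof (Hscale _ _ HA Vx). pose proof (Hscale _ _ HB Vy).
  pose proof (Hscale (a13 * a21) z HC ltac:(lra)).
  unfold lyapunov. repeat split; [exact Px | exact Py | lra].
Qed.

Lemma prey_rate_le x y z e : 0 < e -> us / 2 <= x ->
  r1 * (us - x) <= a13 * e / 4 -> a12 * (vs - y) <= a13 * e / 4 -> e <= z ->
  r1 * x * (1 - x) - a12 * x * y - a13 * x * z <= - (us * a13 * e / 4).
Proof.
  intros He Hx Hru Hrv Hz.
  assert (0 < a13 * e) by (apply Rmult_lt_0_compat; assumption).
  set (g := - r1 * (x - us) - a12 * (y - vs) - a13 * z).
  assert (Hg : g <= - (a13 * e / 2)) by (unfold g; nra).
  replace (r1 * x * (1 - x) - a12 * x * y - a13 * x * z)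
    with (x * g + x * (r1 * (1 - us) - a12 * vs)) by (unfold g; ring).
  rewrite us_eq, Rmult_0_r, Rplus_0_r.
  assert (g * x <= g * (us / 2)) by (apply Rmult_le_compat_neg_l; lra).
  assert (us / 2 * g <= us / 2 * - (a13 * e / 2)) by (apply Rmult_le_compat_l; lra).
  lra.
Qed.

Section Solution.

Variables u v w : R -> R.
Hypothesis sol : is_solution r1 r2 mu a12 a13 a21 a31 u v w.

Lemma solution_continuous :
  continuous_nonneg u /\ continuous_nonneg v /\ continuous_nonneg w.
Proof.
  destruct sol as [Hu [Hv [Hw Hd]]].
  split; [|split]; apply continuous_nonneg_intro; try assumption;
    intros t Ht; destruct (Hd t Ht) as [Du [Dv Dw]]; eexists; eassumption.
Qed.

Hypotheses (u0_pos : 0 < u 0) (v0_pos : 0 < v 0) (w0_nonneg : 0 <= w 0).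

Lemma solution_signs t : 0 <= t -> 0 < u t /\ 0 < v t /\ 0 <= w t.
Proof.
  intros Ht. destruct solution_continuous as [Cu [Cv Cw]]. destruct sol as [_ [_ [_ Hd]]].
  repeat split.
  - apply (pos_of_sign_eq _ (u 0)); [|exact u0_pos].
    apply (sign_preserved u (fun s => r1 + (- r1) * u s + (- a12) * v s + (- a13) * w s));
      [exact Cu | apply continuous_nonneg_affine; assumption | | exact Ht].
    intros s Hs. eapply is_derive_eq; [exact (proj1 (Hd s Hs)) | ring].
  - apply (pos_of_sign_eq _ (v 0)); [|exact v0_pos].
    apply (sign_preserved v (fun s => r2 + a21 * u s + (- r2) * v s + 0 * w s));
      [exact Cv | apply continuous_nonneg_affine; assumption | | exact Ht].
    intros s Hs. eapply is_derive_eq; [exact (proj1 (proj2 (Hd s Hs))) | ring].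
  - apply (nonneg_of_sign_eq _ (w 0)); [|exact w0_nonneg].
    apply (sign_preserved w (fun s => - mu + a31 * u s + 0 * v s + 0 * w s));
      [exact Cw | apply continuous_nonneg_affine; assumption | | exact Ht].
    intros s Hs. eapply is_derive_eq; [exact (proj2 (proj2 (Hd s Hs))) | ring].
Qed.

Lemma is_derive_lyapunov t : 0 < t ->
  is_derive (fun s => lyapunov (u s) (v s) (w s)) t (- lyapunov_rate (u t) (v t) (w t)).
Proof.
  intros Ht. destruct (solution_signs t ltac:(lra)) as [Pu [Pv _]].
  destruct sol as [_ [_ [_ Hd]]]. destruct (Hd t Ht) as [Du [Dv Dw]].
  rewrite <- (lyapunov_orbital_derivative (u t) (v t) (w t) Pu Pv).
  unfold lyapunov.
  apply (is_derive_plus (fun s => a21 * a31 * volterra us (u s) + a12 * a31 * volterra vs (v s))).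
  - apply (is_derive_plus (fun s => a21 * a31 * volterra us (u s))).
    + apply (is_derive_scal (fun s => volterra us (u s))).
      exact (is_derive_comp (volterra us) u t _ _ (is_derive_volterra us _ Pu) Du).
    + apply (is_derive_scal (fun s => volterra vs (v s))).
      exact (is_derive_comp (volterra vs) v t _ _ (is_derive_volterra vs _ Pv) Dv).
  - apply (is_derive_scal w). exact Dw.
Qed.

Lemma lyapunov_continuous : continuous_nonneg (fun t => lyapunov (u t) (v t) (w t)).
Proof.
  intros t Ht. destruct solution_continuous as [Cu [Cv Cw]].
  destruct (solution_signs t Ht) as [Pu [Pv _]].
  apply filterlim_Rplus; [apply filterlim_Rplus|];
    apply (filterlim_Rmult (fun _ => _)); try apply filterlim_const.
  - eapply filterlim_comp; [exact (Cu t Ht) | exact (volterra_continuous us _ Pu)].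
  - eapply filterlim_comp; [exact (Cv t Ht) | exact (volterra_continuous vs _ Pv)].
  - exact (Cw t Ht).
Qed.

Lemma lyapunov_nonincreasing s t : 0 <= s <= t ->
  lyapunov (u t) (v t) (w t) <= lyapunov (u s) (v s) (w s).
Proof.
  intros Hst.
  apply (le_of_deriv_nonpos (fun r => lyapunov (u r) (v r) (w r))
    (fun r => - lyapunov_rate (u r) (v r) (w r)) s t); [lra | | |].
  - apply (right_continuous_of_nonneg (fun r => lyapunov (u r) (v r) (w r)) s);
      [exact lyapunov_continuous | lra].
  - intros r Hr. apply is_derive_lyapunov. lra.
  - intros r Hr. destruct (solution_signs r ltac:(lra)) as [_ [_ Pw]].
    destruct (lyapunov_rate_ge (u r) (v r) (w r) Pw) as [Hnonneg _]. lra.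
Qed.

Lemma solution_bounded : exists B, 0 <= B /\
  forall t, 0 <= t -> 0 < u t <= B /\ 0 < v t <= B /\ 0 <= w t <= B.
Proof.
  set (L := lyapunov (u 0) (v 0) (w 0)).
  assert (HL : 0 <= L).
  { destruct (lyapunov_terms_nonneg _ _ _ u0_pos v0_pos w0_nonneg) as [H1 [H2 H3]].
    unfold L, lyapunov. lra. }
  assert (Hdiv : forall c p, 0 < c -> c * p <= L -> p <= L / c).
  { intros c p Hc Hp. apply (Rmult_le_reg_l c); [exact Hc|].
    replace (c * (L / c)) with L by (field; lra). exact Hp. }
  set (Bu := 2 * (L / (a21 * a31) + us * ln 2)).
  set (Bv := 2 * (L / (a12 * a31) + vs * ln 2)).
  set (Bw := L / (a13 * a21)).
  exists (Rmax Bu (Rmax Bv Bw)).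
  pose proof (Rmax_l Bu (Rmax Bv Bw)). pose proof (Rmax_r Bu (Rmax Bv Bw)).
  pose proof (Rmax_l Bv Bw). pose proof (Rmax_r Bv Bw).
  assert (0 <= Bw) by (apply Rdiv_le_0_compat; nra). split; [lra|].
  intros t Ht. destruct (solution_signs t Ht) as [Pu [Pv Pw]].
  destruct (lyapunov_terms_nonneg _ _ _ Pu Pv Pw) as [T1 [T2 T3]].
  pose proof (lyapunov_nonincreasing 0 t ltac:(lra)) as Hdec. fold L in Hdec.
  unfold lyapunov in Hdec.
  assert (u t <= Bu) by (apply volterra_le_bound; [exact us_pos | exact Pu | apply Hdiv; nra]).
  assert (v t <= Bv) by (apply volterra_le_bound; [exact vs_pos | exact Pv | apply Hdiv; nra]).
  assert (w t <= Bw) by (apply Hdiv; nra).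
  lra.
Qed.

Lemma solution_lipschitz : exists K, 0 < K /\ forall s t, 0 < s <= t ->
  Rabs (u t - u s) <= K * (t - s) /\ Rabs (v t - v s) <= K * (t - s) /\
  Rabs (w t - w s) <= K * (t - s).
Proof.
  destruct solution_bounded as [B [HB Hbd]].
  destruct (vector_field_bounded B HB) as [K [HK Hf]].
  exists K. split; [exact HK|]. intros s t Hst.
  destruct sol as [_ [_ [_ Hd]]].
  assert (Hbc : forall c, s <= c <= t -> 0 <= u c <= B /\ 0 <= v c <= B /\ 0 <= w c <= B)
    by (intros c Hc; destruct (Hbd c ltac:(lra)) as [Bu [Bv Bw]]; repeat split; lra).
  repeat split.
  - apply (abs_sub_le_of_deriv_le u
      (fun c => r1 * u c * (1 - u c) - a12 * u c * v c - a13 * u c * w c)); [lra | |].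
    + intros c Hc. exact (proj1 (Hd c ltac:(lra))).
    + intros c Hc. destruct (Hbc c Hc) as [Bu [Bv Bw]]. exact (proj1 (Hf _ _ _ Bu Bv Bw)).
  - apply (abs_sub_le_of_deriv_le v (fun c => r2 * v c * (1 - v c) + a21 * u c * v c));
      [lra | |].
    + intros c Hc. exact (proj1 (proj2 (Hd c ltac:(lra)))).
    + intros c Hc. destruct (Hbc c Hc) as [Bu [Bv Bw]].
      exact (proj1 (proj2 (Hf _ _ _ Bu Bv Bw))).
  - apply (abs_sub_le_of_deriv_le w (fun c => - mu * w c + a31 * u c * w c)); [lra | |].
    + intros c Hc. exact (proj2 (proj2 (Hd c ltac:(lra)))).
    + intros c Hc. destruct (Hbc c Hc) as [Bu [Bv Bw]].
      exact (proj2 (proj2 (Hf _ _ _ Bu Bv Bw))).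
Qed.

Lemma lyapunov_cauchy : cauchy_at_infty (fun t => lyapunov (u t) (v t) (w t)).
Proof.
  apply (cauchy_of_nonincreasing _ 0 0).
  - intros s t Hst. apply lyapunov_nonincreasing. lra.
  - intros t Ht. destruct (solution_signs t Ht) as [Pu [Pv Pw]].
    destruct (lyapunov_terms_nonneg _ _ _ Pu Pv Pw) as [H1 [H2 H3]]. unfold lyapunov. lra.
Qed.

Lemma lyapunov_drop c s t : 0 < s <= t ->
  (forall r, s <= r <= t -> c <= lyapunov_rate (u r) (v r) (w r)) ->
  c * (t - s) <= lyapunov (u s) (v s) (w s) - lyapunov (u t) (v t) (w t).
Proof.
  intros Hst Hc.
  enough (lyapunov (u t) (v t) (w t) - lyapunov (u s) (v s) (w s) <= - c * (t - s)) by lra.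
  apply (sub_le_of_deriv_le (fun r => lyapunov (u r) (v r) (w r))
    (fun r => - lyapunov_rate (u r) (v r) (w r)) s t); [lra | | ].
  - intros r Hr. apply is_derive_lyapunov. lra.
  - intros r Hr. specialize (Hc r Hr). lra.
Qed.

Lemma is_lim_of_rate_bound (y : R -> R) (l c K : R) : 0 < c -> 0 < K ->
  (forall s t, 1 <= s <= t -> Rabs (y t - y s) <= K * (t - s)) ->
  (forall r, 0 <= r -> c * (y r - l) ^ 2 <= lyapunov_rate (u r) (v r) (w r)) ->
  is_lim y p_infty l.
Proof.
  intros Hc HK Hlip Hrate.
  apply (is_lim_of_dissipation y (fun t => lyapunov (u t) (v t) (w t)) l 1 K HK Hlip
    lyapunov_cauchy).
  intros e He. exists (c * e ^ 2), 1.
  split; [apply Rmult_lt_0_compat; [exact Hc | apply pow_lt, He]|].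
  intros s t Hst Hfar. apply lyapunov_drop; [lra|]. intros r Hr.
  pose proof (sq_le_of_le_abs e (y r - l) ltac:(lra) (Hfar r Hr)).
  assert (c * e ^ 2 <= c * (y r - l) ^ 2) by (apply Rmult_le_compat_l; lra).
  specialize (Hrate r ltac:(lra)). lra.
Qed.

Lemma u_tends : is_lim u p_infty us.
Proof.
  destruct solution_lipschitz as [K [HK Hlip]].
  apply (is_lim_of_rate_bound u us (a21 * a31 * r1) K); [| exact HK | |].
  - repeat apply Rmult_lt_0_compat; assumption.
  - intros s t Hst. apply Hlip. lra.
  - intros r Hr. destruct (solution_signs r Hr) as [_ [_ Pw]].
    exact (proj1 (proj2 (lyapunov_rate_ge _ _ _ Pw))).
Qed.

Lemma v_tends : is_lim v p_infty vs.
Proof.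
  destruct solution_lipschitz as [K [HK Hlip]].
  apply (is_lim_of_rate_bound v vs (a12 * a31 * r2) K); [| exact HK | |].
  - repeat apply Rmult_lt_0_compat; assumption.
  - intros s t Hst. apply Hlip. lra.
  - intros r Hr. destruct (solution_signs r Hr) as [_ [_ Pw]].
    exact (proj2 (proj2 (lyapunov_rate_ge _ _ _ Pw))).
Qed.

Lemma w_tends : is_lim w p_infty 0.
Proof.
  destruct solution_lipschitz as [K [HK Hlip]].
  apply (is_lim_of_dissipation w u 0 1 K HK);
    [intros s t Hst; apply Hlip; lra | exact (cauchy_of_is_lim u us u_tends) |].
  intros e He.
  pose proof (Rmin_l (us / 2) (a13 * e / (4 * r1))) as Hhu1.
  pose proof (Rmin_r (us / 2) (a13 * e / (4 * r1))) as Hhu2.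
  set (hu := Rmin (us / 2) (a13 * e / (4 * r1))) in *.
  assert (Hhu : 0 < hu) by (apply Rmin_glb_lt; [lra | apply Rdiv_lt_0_compat; nra]).
  destruct (proj1 (is_lim_p_infty_spec u us) u_tends hu Hhu) as [Tu HTu].
  destruct (proj1 (is_lim_p_infty_spec v vs) v_tends (a13 * e / (4 * a12))
    ltac:(apply Rdiv_lt_0_compat; nra)) as [Tv HTv].
  assert (0 < us * a13 * e) by (repeat apply Rmult_lt_0_compat; assumption).
  exists (us * a13 * e / 4), (Rmax 1 (Rmax Tu Tv)). split; [lra|].
  intros s t Hst Hfar.
  pose proof (Rmax_l 1 (Rmax Tu Tv)). pose proof (Rmax_r 1 (Rmax Tu Tv)).
  pose proof (Rmax_l Tu Tv). pose proof (Rmax_r Tu Tv).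
  destruct sol as [_ [_ [_ Hd]]].
  enough (u t - u s <= - (us * a13 * e / 4) * (t - s)) by lra.
  apply (sub_le_of_deriv_le u
    (fun c => r1 * u c * (1 - u c) - a12 * u c * v c - a13 * u c * w c));
    [lra | intros c Hc; exact (proj1 (Hd c ltac:(lra))) |].
  intros c Hc.
  specialize (HTu c ltac:(lra)). specialize (HTv c ltac:(lra)). specialize (Hfar c Hc).
  destruct (solution_signs c ltac:(lra)) as [_ [_ Pw]].
  rewrite Rminus_0_r, Rabs_right in Hfar by lra.
  apply Rabs_def2 in HTu. apply Rabs_def2 in HTv.
  apply prey_rate_le; [exact He | lra | | | exact Hfar].
  - apply Rle_trans with (r1 * (a13 * e / (4 * r1))); [apply Rmult_le_compat_l; lra|].
    right. field. lra.
  - apply Rle_trans with (a12 * (a13 * e / (4 * a12))); [apply Rmult_le_compat_l; lra|].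
    right. field. lra.
Qed.

End Solution.

Lemma E12_stable eps : 0 < eps -> exists delta, 0 < delta /\
  forall u v w : R -> R, is_solution r1 r2 mu a12 a13 a21 a31 u v w ->
  0 <= w 0 -> dist3 (u 0) (v 0) (w 0) us vs 0 < delta ->
  forall t, 0 <= t -> dist3 (u t) (v t) (w t) us vs 0 < eps.
Proof.
  intros Heps.
  destruct (lyapunov_small_close eps Heps) as [m [Hm Hclose]].
  destruct (lyapunov_near_small m Hm) as [delta [Hdelta Hnear]].
  exists delta. split; [exact Hdelta|]. intros u v w Hsol Hw0 Hdist t Ht.
  destruct (Hnear _ _ _ Hw0 Hdist) as [Pu0 [Pv0 HV0]].
  destruct (solution_signs u v w Hsol Pu0 Pv0 Hw0 t Ht) as [Pu [Pv Pw]].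
  pose proof (lyapunov_nonincreasing u v w Hsol Pu0 Pv0 Hw0 0 t ltac:(lra)).
  apply Hclose; [exact Pu | exact Pv | exact Pw | lra].
Qed.

Lemma E12_attracts (u v w : R -> R) : is_solution r1 r2 mu a12 a13 a21 a31 u v w ->
  0 < u 0 -> 0 < v 0 -> 0 <= w 0 ->
  is_lim u p_infty us /\ is_lim v p_infty vs /\ is_lim w p_infty 0.
Proof.
  intros. split; [|split];
    [apply (u_tends u v w) | apply (v_tends u v w) | apply (w_tends u v w)]; assumption.
Qed.

End Model.

Lemma u12_v12_equilibrium r1 r2 a12 a21 :
  0 < r1 -> 0 < r2 -> 0 < a12 -> 0 < a21 -> a12 < r1 ->
  let us := u12 r1 r2 a12 a21 in
  let vs := v12 r1 r2 a12 a21 in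
  0 < us /\ 0 < vs /\ r1 * (1 - us) - a12 * vs = 0 /\ r2 * (1 - vs) + a21 * us = 0.
Proof.
  intros hr1 hr2 ha12 ha21 hr1a12 us vs.
  unfold us, vs, u12, v12.
  assert (Hden : 0 < r1 * r2 + a12 * a21) by nra.
  repeat split; [apply Rdiv_lt_0_compat; nra | apply Rdiv_lt_0_compat; nra | | ];
    field; lra.
Qed.

Theorem theorem1 (r1 r2 mu a12 a13 a21 a31 : R)
  (hr1 : 0 < r1) (hr2 : 0 < r2) (hmu : 0 < mu) (ha12 : 0 < a12)
  (ha13 : 0 < a13) (ha21 : 0 < a21) (ha31 : 0 < a31)
  (hr1a12 : r1 > a12)
  (hmu_ge : mu >= a31 * u12 r1 r2 a12 a21) :
  let us := u12 r1 r2 a12 a21 in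
  let vs := v12 r1 r2 a12 a21 in
  (* existence: E12 lies in the open positive part of the (u,v)-plane *)
  (0 < us /\ 0 < vs) /\
  (* E12 is an equilibrium *)
  (r1 * us * (1 - us) - a12 * us * vs - a13 * us * 0 = 0 /\
   r2 * vs * (1 - vs) + a21 * us * vs = 0 /\
   - mu * 0 + a31 * us * 0 = 0) /\
  (* Lyapunov stability (solutions in the nonnegative orthant) *)
  (forall eps, 0 < eps -> exists delta, 0 < delta /\
     forall u v w : R -> R,
       is_solution r1 r2 mu a12 a13 a21 a31 u v w ->
       0 <= u 0 -> 0 <= v 0 -> 0 <= w 0 ->
       dist3 (u 0) (v 0) (w 0) us vs 0 < delta ->
       forall t, 0 <= t -> dist3 (u t) (v t) (w t) us vs 0 < eps) /\
  (* global attraction *)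
  (forall u v w : R -> R,
     is_solution r1 r2 mu a12 a13 a21 a31 u v w ->
     0 < u 0 -> 0 < v 0 -> 0 <= w 0 ->
     is_lim u p_infty us /\ is_lim v p_infty vs /\ is_lim w p_infty 0).
Proof.
  intros us vs.
  destruct (u12_v12_equilibrium r1 r2 a12 a21 hr1 hr2 ha12 ha21 hr1a12)
    as [Hus [Hvs [Eu Ev]]].
  change (r1 * (1 - us) - a12 * vs = 0) in Eu. change (r2 * (1 - vs) + a21 * us = 0) in Ev.
  assert (Hmu : a31 * us <= mu) by (unfold us; lra).
  split; [|split; [|split]].
  - split; assumption.
  - split; [|split].
    + transitivity (us * (r1 * (1 - us) - a12 * vs)); [ring | rewrite Eu; ring].
    + transitivity (vs * (r2 * (1 - vs) + a21 * us)); [ring | rewrite Ev; ring].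
    + ring.
  - intros eps Heps.
    destruct (E12_stable r1 r2 mu a12 a13 a21 a31 hr1 hr2 ha12 ha13 ha21 ha31
      us vs Hus Hvs Eu Ev Hmu eps Heps) as [delta [Hdelta Hstab]].
    exists delta. split; [exact Hdelta|].
    intros u v w Hsol _ _ Hw0. exact (Hstab u v w Hsol Hw0).
  - intros u v w. apply (E12_attracts r1 r2 mu a12 a13 a21 a31); assumption.
Qed.
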